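(* The binary relation $<$ on $\mathrm{Ord}$ is well-founded: for every property $P$ of elements of $\mathrm{Ord}$ such that $P(\alpha)$ holds whenever $P(\gamma)$ holds for all $\gamma<\alpha$, $P$ holds for all $\alpha\in\mathrm{Ord}$ (and more generally constructions by $<$-induction are possible).
   Context: Work constructively. Let $\mathfrak F$ be a set of index sets containing $\mathbb N$ and each $\mathbb N_k=\{n\in\mathbb N:n<k\}$ ($k\ge0$), closed (up to isomorphism) under finitely enumerated subsets, sets of finitely enumerated subsets, and disjoint unions indexed by elements of $\mathfrak F$. A finitely enumerated subset of $A$ is one given by a map $\mathbb N_k\to A$; write $F\subseteq_f I$. The set $\mathrm{ord}$ is inductively generated by $\underline 0$ and, for every family $(\alpha_i)_{i\in I}$ with $I\in\mathfrak F$, $\alpha_i\in\mathrm{ord}$, an element $\mathrm S(\alpha_i)_{i\in I}$; for such $\alpha$, $I_\alpha=I$ and $\alpha_i$ are its definitional subordinals; $I_{\underline 0}=\emptyset$. For a finite list $F$ in $I_\alpha$, $\alpha_F$ is the list of the $\alpha_i$, $i\in F$. Relations between an element and a nonempty finite list, by simultaneous induction: $\alpha\le\beta^1,\dots,\beta^m$ means $\alpha_i<\beta^1,\dots,\beta^m$ for all $i\in I_\alpha$; $\alpha<\beta^1,\dots,\beta^m$ means there exist $F_1\subseteq_f I_{\beta^1},\dots,F_m\subseteq_f I_{\beta^m}$, not all empty, with $\alpha\le\beta^1_{F_1},\dots,\beta^m_{F_m}$; $\alpha\le\beta$, $\alpha<\beta$ are the case $m=1$. $\alpha=_{\mathrm{Ord}}\beta$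 means $\alpha\le\beta$ and $\beta\le\alpha$; it is an equivalence relation compatible with $\le$ and $<$, and $\mathrm{Ord}$ is the quotient with the induced relations. *)

From mathcomp Require Import all_boot.

Set Implicit Arguments.
Unset Strict Implicit.
Unset Printing Implicit Defensive.

(* N_k = {n : nat | n < k} is MathComp's 'I_k. *)

(* A finitely enumerated subset of A: a map N_k -> A. *)
Definition fsub (A : Type) : Type := {k : nat & 'I_k -> A}.

Definition fsub_list (A : Type) (F : fsub A) : seq A :=
  map (projT2 F) (enum 'I_(projT1 F)).

Definition fsub_set (A : Type) (F : fsub A) : Type :=
  {a : A | exists j, projT2 F j = a}.

Definition iso (A B : Type) : Prop :=
  exists (f : A -> B) (g : B -> A), cancel f g /\ cancel g f.

(* A family 𝔉 of index sets, given as codes U with decoding El, satisfying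
   the closure conditions (up to isomorphism). *)
Record IndexFamily (U : Type) (El : U -> Type) : Prop := {
  IF_nat : exists u, iso (El u) nat;
  IF_Nk : forall k : nat, exists u, iso (El u) 'I_k;
  IF_fsub : forall (u : U) (F : fsub (El u)), exists v, iso (El v) (fsub_set F);
  IF_fsubs : forall u : U, exists v, iso (El v) (fsub (El u));
  IF_sigma : forall (u : U) (J : El u -> U),
      exists v, iso (El v) {i : El u & El (J i)}
}.

Section Ordinals.
Variables (U : Type) (El : U -> Type).

Inductive ord : Type :=
  | zero_ord : ord
  | S_ord (I : U) (alpha : El I -> ord) : ord.

Definition idx (a : ord) : Type :=
  match a with zero_ord => Empty_set | S_ord J _ => El J end.

Definition sub (a : ord) : idx a -> ord :=
  match a as a0 return idx a0 -> ord with
  | zero_ord => fun e => match e with end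
  | S_ord J f => f
  end.

(* A choice of F_1 ⊆_f I_{beta^1}, ..., F_m ⊆_f I_{beta^m}. *)
Fixpoint sel (bs : seq ord) : Type :=
  match bs with
  | [::] => unit
  | b :: bs' => (fsub (idx b) * sel bs')%type
  end.

Fixpoint sel_list (bs : seq ord) : sel bs -> seq ord :=
  match bs as bs0 return sel bs0 -> seq ord with
  | [::] => fun _ => [::]
  | b :: bs' => fun s => map (@sub b) (fsub_list s.1) ++ sel_list s.2
  end.

Fixpoint sel_not_all_empty (bs : seq ord) : sel bs -> Prop :=
  match bs as bs0 return sel bs0 -> Prop with
  | [::] => fun _ => False
  | b :: bs' => fun s => projT1 s.1 <> 0 \/ sel_not_all_empty s.2
  end.

(* "alpha < bs" expressed from the relation "alpha <= _". *)
Definition lt_from (le_a : seq ord -> Prop) (bs : seq ord) : Prop :=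
  exists s : sel bs, sel_not_all_empty s /\ le_a (sel_list s).

Fixpoint ord_le (a : ord) (bs : seq ord) : Prop :=
  match a with
  | zero_ord => True
  | S_ord J f => forall i : El J, lt_from (ord_le (f i)) bs
  end.

Definition ord_lt (a : ord) (bs : seq ord) : Prop := lt_from (ord_le a) bs.

Definition ord_le1 (a b : ord) : Prop := ord_le a [:: b].
Definition ord_lt1 (a b : ord) : Prop := ord_lt a [:: b].

(* =_Ord ; Ord is the quotient (setoid) of ord by this relation. *)
Definition ord_eq (a b : ord) : Prop := ord_le1 a b /\ ord_le1 b a.

End Ordinals.

(** Write [step cs bs] when [cs] is a nonempty list of definitional
    subordinals of members of [bs].  Unfolding the definitions, [a < bs] holds
    iff [a <= cs] for some [step cs bs].  Once [<=] is shown monotone in its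
    list argument and transitive, [e < d <= xs] yields [e <= W] for some
    [step W xs], so every [d <= xs] is [<]-accessible by [step]-induction on
    [xs].  And [step] is well-founded: singleton lists are accessible by
    structural induction on the ordinal, and accessibility is preserved by
    concatenation, because a [step] below [xs ++ ys] splits into a part below
    [xs] and a part below [ys].  No closure property of the index family is
    needed. *)

From mathcomp Require Import all_boot.
From Stdlib Require List.
Import List (In, incl).

Set Implicit Arguments.
Unset Strict Implicit.
Unset Printing Implicit Defensive.

(* [cat] is convertible to [List.app], but not syntactically equal to it. *)
Lemma In_cat (T : Type) (x : T) (s1 s2 : seq T) :
  In x (s1 ++ s2) <-> In x s1 \/ In x s2.
Proof. exact: List.in_app_iff. Qed.

Definition fsub_of_seq (A : Type) (s : seq A) : fsub A :=
  existT _ (size s) (tnth (in_tuple s)).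

Lemma fsub_of_seqK (A : Type) (s : seq A) : fsub_list (fsub_of_seq s) = s.
Proof. exact: map_tnth_enum. Qed.

Section Subordinals.
Variables (U : Type) (El : U -> Type).
Implicit Types (a b c d e : ord El) (bs cs xs ys zs : seq (ord El)).

Definition subordinal_of bs c : Prop :=
  exists2 b, In b bs & exists i : idx b, c = sub i.

Definition step cs bs : Prop :=
  cs <> [::] /\ forall c, In c cs -> subordinal_of bs c.

Lemma subordinal_of_incl bs cs c :
  incl bs cs -> subordinal_of bs c -> subordinal_of cs c.
Proof. by move=> sub_bs [b /sub_bs b_cs sub_c]; exists b. Qed.

Lemma step_cat cs1 cs2 bs : step cs1 bs -> step cs2 bs -> step (cs1 ++ cs2) bs.
Proof.
case: cs1 => [|c cs1] [ne1 sub1] [_ sub2] //.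
by split=> // x /In_cat[/sub1 | /sub2].
Qed.

Lemma sel_not_all_emptyE bs (s : sel bs) :
  sel_not_all_empty s <-> ~~ nilp (sel_list s).
Proof.
elim: bs s => [|b bs IH] [] //= F s.
rewrite cat_nilp negb_and IH /nilp size_map /fsub_list size_map size_enum_ord.
by split=> [[/eqP -> | ->] | /orP[/eqP | ->]]; rewrite ?orbT; auto.
Qed.

Lemma sel_list_subordinal bs (s : sel bs) c :
  In c (sel_list s) -> subordinal_of bs c.
Proof.
elim: bs s => [|b bs IH] //= [F s] /In_cat[/List.in_map_iff[i [<- _]] | /IH].
  by exists b; [left | exists i].
by apply: subordinal_of_incl => x; right.
Qed.

Lemma sel_list_add bs (s : sel bs) c : subordinal_of bs c ->
  exists s' : sel bs, In c (sel_list s') /\ incl (sel_list s) (sel_list s').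
Proof.
elim: bs s => [|b bs IH] s [b' b'_in sub_c]; first by case: b'_in.
case: s b'_in sub_c => F s [<- | b'_bs] sub_c.
  case: sub_c => i ->; exists (fsub_of_seq (i :: fsub_list F), s).
  by rewrite /= fsub_of_seqK; split=> [|x x_s]; [left | right].
have [s' [c_s' sub_s']] := IH s (ex_intro2 _ _ b' b'_bs sub_c).
exists (F, s'); split; first by apply/In_cat; right.
by move=> x /In_cat[]; rewrite In_cat; auto.
Qed.

Lemma sel_list_cover bs cs : (forall c, In c cs -> subordinal_of bs c) ->
  exists s : sel bs, incl cs (sel_list s).
Proof.
elim: cs => [|c cs IH] sub_cs.
  have [s] : inhabited (sel bs).
    elim: bs {sub_cs} => [|b bs [s]]; constructor; first exact: tt.
    exact: (fsub_of_seq [::], s).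
  by exists s.
have [s cs_s] := IH (fun x x_cs => sub_cs x (or_intror x_cs)).
have [s' [c_s' sub_s']] := sel_list_add s (sub_cs c (or_introl erefl)).
by exists s' => x [<- | /cs_s /sub_s'].
Qed.

Lemma lt_fromP (P : seq (ord El) -> Prop) bs :
  lt_from P bs -> exists2 cs, step cs bs & P cs.
Proof.
case=> s [/sel_not_all_emptyE ne Ps]; exists (sel_list s) => //.
by split=> [nil_s|]; [rewrite nil_s in ne | exact: sel_list_subordinal].
Qed.

Lemma lt_from_intro (P : seq (ord El) -> Prop) bs cs :
  step cs bs -> (forall ys, incl cs ys -> P ys) -> lt_from P bs.
Proof.
case=> ne sub_cs P_sup; have [s cs_s] := sel_list_cover sub_cs.
exists s; split; last exact: P_sup.
apply/sel_not_all_emptyE; case: cs ne cs_s {sub_cs P_sup} => [|c cs] // _ cs_s.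
by case: (sel_list s) (cs_s c (or_introl erefl)).
Qed.

Lemma ord_le_incl d xs ys : ord_le d xs -> incl xs ys -> ord_le d ys.
Proof.
elim: d xs ys => [|I f IH] xs ys //= le_xs sub_xs i.
have [cs [ne sub_cs] le_cs] := lt_fromP (le_xs i).
apply: (lt_from_intro (cs := cs)) => [|zs]; last exact: IH.
by split=> // c /sub_cs; apply: subordinal_of_incl.
Qed.

Lemma ord_lt_intro d cs bs : step cs bs -> ord_le d cs -> lt_from (ord_le d) bs.
Proof.
move=> step_cs le_cs.
by apply: (lt_from_intro step_cs) => ys /(ord_le_incl le_cs).
Qed.

Lemma ord_le_sub_lt b zs (i : idx b) :
  ord_le b zs -> lt_from (ord_le (sub i)) zs.
Proof. by case: b i => [[] | I f] /=. Qed.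

Lemma step_common_bound cs zs :
  cs <> [::] -> (forall c, In c cs -> exists2 ws, step ws zs & ord_le c ws) ->
  exists2 W, step W zs & forall c, In c cs -> ord_le c W.
Proof.
elim: cs => [|c cs IH] // _ bound_cs.
have [ws step_ws le_ws] := bound_cs c (or_introl erefl).
case: cs IH bound_cs => [|c' cs] IH bound_cs.
  by exists ws => // x [<- | []].
have [|W step_W le_W] := IH _ (fun x x_cs => bound_cs x (or_intror x_cs)) => //.
exists (ws ++ W); first exact: step_cat.
move=> x [<- | /le_W le_x].
  by apply: ord_le_incl le_ws _ => y y_ws; apply/In_cat; left.
by apply: ord_le_incl le_x _ => y y_W; apply/In_cat; right.
Qed.

Lemma step_le_bound cs ys zs :
  step cs ys -> (forall y, In y ys -> ord_le y zs) ->
  exists2 W, step W zs & forall c, In c cs -> ord_le c W.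
Proof.
case=> ne sub_cs le_ys; apply: step_common_bound => // c /sub_cs[b b_ys [i ->]].
exact/lt_fromP/ord_le_sub_lt/le_ys.
Qed.

Lemma ord_le_trans e ys zs :
  ord_le e ys -> (forall y, In y ys -> ord_le y zs) -> ord_le e zs.
Proof.
elim: e ys zs => [|I f IH] ys zs //= le_ys ys_le i.
have [cs step_cs le_cs] := lt_fromP (le_ys i).
have [W step_W cs_le] := step_le_bound step_cs ys_le.
exact: ord_lt_intro step_W (IH i cs W le_cs cs_le).
Qed.

Lemma ord_lt_le_step e d xs :
  ord_lt1 e d -> ord_le d xs -> exists2 W, step W xs & ord_le e W.
Proof.
move=> /lt_fromP[cs step_cs le_cs] le_d.
have d_le : forall y, In y [:: d] -> ord_le y xs by move=> y [<- | []].
have [W step_W cs_le] := step_le_bound step_cs d_le.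
by exists W => //; apply: ord_le_trans le_cs cs_le.
Qed.

Lemma Acc_step_incl xs ys : Acc step xs -> incl ys xs -> Acc step ys.
Proof.
case=> acc_xs sub_ys; constructor=> cs [ne sub_cs]; apply: acc_xs; split=> // c.
by move/sub_cs; apply: subordinal_of_incl.
Qed.

Lemma Acc_step_nil : Acc step [::].
Proof.
constructor=> [[|c cs] [ne sub_cs]]; first by case: ne.
by case: (sub_cs c (or_introl erefl)) => b [].
Qed.

Lemma Acc_step_subordinals cs ys :
  Acc step ys -> (forall c, In c cs -> subordinal_of ys c) -> Acc step cs.
Proof.
case: cs => [|c cs] acc_ys sub_cs; first exact: Acc_step_nil.
by apply: (Acc_inv acc_ys); split.
Qed.

Lemma subordinal_of_cat_split cs xs ys :
  (forall c, In c cs -> subordinal_of (xs ++ ys) c) ->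
  exists cs1 cs2, [/\ forall c, In c cs1 -> subordinal_of xs c,
    forall c, In c cs2 -> subordinal_of ys c & incl cs (cs1 ++ cs2)].
Proof.
elim: cs => [|c cs IH] sub_cs; first by exists [::], [::]; split=> x [].
have [cs1 [cs2 [sub1 sub2 cs_sub]]] := 
  IH (fun x x_cs => sub_cs x (or_intror x_cs)).
have [b /In_cat[b_xs | b_ys] sub_b] := sub_cs c (or_introl erefl).
- exists (c :: cs1), cs2.
  split=> [x [<- | /sub1] // | // | x [<- | /cs_sub x_in]].
  + by exists b.
  + by left.
  + by right.
- exists cs1, (c :: cs2).
  split=> [// | x [<- | /sub2] // | x [<- | /cs_sub /In_cat x_in]].
  + by exists b.
  + by apply/In_cat; right; left.
  + by apply/In_cat; case: x_in; [left | right; right].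
Qed.

Lemma Acc_step_cat xs ys : Acc step xs -> Acc step ys -> Acc step (xs ++ ys).
Proof.
move=> acc_xs; elim: acc_xs ys => {}xs _ IH ys acc_ys.
constructor=> cs [_ sub_cs].
have [cs1 [cs2 [sub1 sub2 cs_sub]]] := subordinal_of_cat_split sub_cs.
apply: Acc_step_incl cs_sub; have acc2 := Acc_step_subordinals acc_ys sub2.
case: cs1 sub1 => [|c1 cs1] sub1; first exact: acc2.
by apply: IH acc2; split.
Qed.

Lemma Acc_step_all cs : (forall c, In c cs -> Acc step [:: c]) -> Acc step cs.
Proof.
elim: cs => [|c cs IH] acc_cs; first exact: Acc_step_nil.
apply: (@Acc_step_cat [:: c]); first by apply: acc_cs; left.
by apply: IH => x x_cs; apply: acc_cs; right.
Qed.

Lemma Acc_step1 c : Acc step [:: c].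
Proof.
elim: c => [|I f IH]; constructor=> cs [_ sub_cs]; apply: Acc_step_all => c.
  by move/sub_cs=> [b [<- | []] [[]]].
by move/sub_cs=> [b [<- | []] [i ->]].
Qed.

Lemma step_wf : well_founded step.
Proof. by move=> xs; apply: Acc_step_all => c _; apply: Acc_step1. Qed.

Lemma ord_le_Acc xs d : ord_le d xs -> Acc (@ord_lt1 U El) d.
Proof.
elim/(well_founded_ind step_wf): xs d => xs IH d le_d; constructor=> e lt_e.
have [W step_W le_e] := ord_lt_le_step lt_e le_d.
exact: IH step_W e le_e.
Qed.

Lemma ord_lt1_wf : well_founded (@ord_lt1 U El).
Proof.
move=> a; constructor=> e /lt_fromP[cs _ le_cs]; exact: ord_le_Acc le_cs.
Qed.

End Subordinals.

Theorem proposition4p11 (U : Type) (El : U -> Type) (HF : IndexFamily El) :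
  well_founded (@ord_lt1 U El) /\
  (forall P : ord El -> Prop,
     (forall a b : ord El, ord_eq a b -> P a -> P b) ->
     (forall a : ord El, (forall c : ord El, ord_lt1 c a -> P c) -> P a) ->
     forall a : ord El, P a).
Proof.
split; first exact: ord_lt1_wf.
by move=> P _; apply: well_founded_ind (@ord_lt1_wf U El) P.
Qed.
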